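(* For $\Re(s)\ge0$ and $(u,v)\in\mathbb{D}\times\mathbb{D}$, the function $F=F(s;\cdot,\cdot)$ satisfies the linear partial differential equation $$uP(u)\frac{\partial F}{\partial u}(u,v)+v\left[\rho(1-q)-(s+1+\rho-v)(u-q)\right]\frac{\partial F}{\partial v}(u,v)+\left[u(u-s-1-\rho)+(u-q)(u+v)\right]F(u,v)+L(u,v)=0,$$ where $P(u)=u^2-(s+1+\rho+q)u+sq+\rho+q$ and $$L(u,v)=\frac{v}{1-u}+(u+v)E(q,v)-v(s+1+\rho-v)\frac{\partial E}{\partial v}(q,v).$$
   Context: Queueing model: an $M^{[X]}/M/1$ processor-sharing queue. Batches arrive according to a Poisson process with rate $\rho>0$; each job requires an exponential service with mean $1$; the unit server capacity is shared equally among all jobs present; interarrival times, batch sizes and service requirements are independent. Batch sizes are geometric: $\mathbb{P}(B=b)=(1-q)q^{b-1}$, $b\ge1$, with $q\in(0,1)$, $\rho+q<1$. For $n\ge0,b\ge1$, $\Omega_{n,b}$ is the sojourn time of a tagged batch (from arrival to departure of its last job) given $n$ jobs present at its arrival and batch size $b$; $e^*_{n,b}(s)=\mathbb{E}(e^{-s\Omega_{n,b}})$. $\mathbb{D}$ is the open unit disk. $E(u,v)=E(s;u,v)=\sum_{n\ge0}\sum_{b\ge1}e^*_{n,b}(s)u^nv^b$ on $\mathbb{D}^2$, and $F(u,v)=\frac{E(u,v)-E(q,v)}{u-q}$ for $u\ne q$, $F(q,v)=\frac{\partial E}{\partial u}(q,v)$ (the dependence on $s$ is suppressed). *)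

From Stdlib Require Import Reals ClassicalEpsilon.
From Coquelicot Require Import Coquelicot.

Open Scope R_scope.

(* Embedded jump chain of the tagged-batch process.  State (n,k):
   n = number of other jobs, k = remaining jobs of the tagged batch.
   While k >= 1 the total event rate is rho + 1 (Poisson arrivals at rate
   rho, unit-capacity exponential(1) processor sharing), so each sojourn
   in a state is Exp(rho+1).  An arrival (prob rho/(1+rho)) brings a batch
   of size b+1 w.p. (1-q) q^b; a departure (prob 1/(1+rho)) is a tagged job
   w.p. k/(n+k) and another job w.p. n/(n+k).
   absorb_prob rho q m n k = P(the tagged batch leaves after exactly m events
   | initial state (n,k)). *)
Fixpoint absorb_prob (rho q : R) (m n k : nat) : R :=
  match m with
  | O => match k with O => 1 | S _ => 0 end
  | S m' =>
    match k with
    | O => 0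
    | S k' =>
      rho / (1 + rho) *
        Series (fun b => (1 - q) * q ^ b * absorb_prob rho q m' (n + S b) k)
      + / (1 + rho) *
        (INR k / INR (n + k) * absorb_prob rho q m' n k'
         + INR n / INR (n + k) * absorb_prob rho q m' (pred n) k)
    end
  end.

Definition CSeries (a : nat -> C) : C :=
  (Series (fun i => fst (a i)), Series (fun i => snd (a i))).

(* Laplace–Stieltjes transform of Omega_{n,b}: the sojourn time is a sum of
   N i.i.d. Exp(rho+1) holding times, N the number of events to absorption,
   so E e^{-s Omega} = sum_m P(N = m) ((1+rho)/(1+rho+s))^m. *)
Definition estar (rho q : R) (s : C) (n b : nat) : C :=
  CSeries (fun m => RtoC (absorb_prob rho q m n b) *
                    Cpow (RtoC (1 + rho) / (RtoC (1 + rho) + s)) m)%C.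

Definition Egen (rho q : R) (s u v : C) : C :=
  CSeries (fun n => Cpow u n *
     CSeries (fun b => estar rho q s n (S b) * Cpow v (S b)))%C.

(* complex derivative (0 if it does not exist) *)
Definition Cderive (f : C -> C) (z : C) : C :=
  match excluded_middle_informative
          (exists l : C, @is_derive C_AbsRing C_NormedModule f z l) with
  | left H => proj1_sig (constructive_indefinite_description _ H)
  | right _ => RtoC 0
  end.

Definition Fgen (rho q : R) (s u v : C) : C :=
  if excluded_middle_informative (u = RtoC q)
  then Cderive (fun w => Egen rho q s w v) (RtoC q)
  else ((Egen rho q s u v - Egen rho q s (RtoC q) v) / (u - RtoC q))%C.

Definition Ppoly (rho q : R) (s u : C) : C :=
  (u * u - (s + RtoC 1 + RtoC rho + RtoC q) * u + s * RtoC q + RtoC rho + RtoC q)%C.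

(* Write e_{n,b} for e*_{n,b}(s) and f_{n,b} = sum_k q^k e_{n+1+k,b}.  Conditioning on the
   first event after the arrival of the tagged batch gives
     (1+rho+s) e_{n,b+1} = rho (1-q) f_{n,b+1} + (b+1)/(n+b+1) e_{n,b} + n/(n+b+1) e_{n-1,b+1},
   and |e_{n,b}| <= 1 because e_{n,b} = sum_m P(N = m) z^m with |z| <= 1, N being the number
   of events before the batch leaves.  Hence E and F are double power series with polynomially
   bounded coefficients on the bidisc, where they can be differentiated termwise and summed in
   either order.  Multiplying the recursion by n+b and comparing coefficients gives
     (1+rho+s)(u E_u + v E_v) = rho (1-q)(u F_u + v F_v) + v/(1-u) + (u+v) E + u^2 E_u + v^2 E_v,
   and the f_{n,b} are the coefficients of F because E(u,v) = E(q,v) + (u-q) F(u,v).  Substituting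
   this decomposition, E_u = F + (u-q) F_u and E_v(u,v) = E_v(q,v) + (u-q) F_v into the identity
   above yields the equation. *)

From Stdlib Require Import Reals Lra Lia ClassicalEpsilon FunctionalExtensionality.
From Coquelicot Require Import Coquelicot.

Open Scope R_scope.

(** * Complex series *)

Notation is_seriesC := (@is_series C_AbsRing C_NormedModule).

Lemma sum_n_shift {G : AbelianMonoid} (a : nat -> G) n :
  sum_n a (S n) = plus (a O) (sum_n (fun k => a (S k)) n).
Proof.
  induction n as [|n IH].
  - now rewrite sum_Sn, !sum_O.
  - now rewrite sum_Sn, IH, sum_Sn, plus_assoc.
Qed.

Lemma Series_shift_zero (a : nat -> R) : a O = 0 -> Series (fun k => a (S k)) = Series a.
Proof.
  intros H0. unfold Series. rewrite <- (Lim_seq_incr_1 (sum_n a)).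
  f_equal. apply Lim_seq_ext. intros n. rewrite sum_n_shift, H0. symmetry. apply Rplus_0_l.
Qed.

Lemma CSeries_ext (a b : nat -> C) : (forall n, a n = b n) -> CSeries a = CSeries b.
Proof. intros H. unfold CSeries. f_equal; apply Series_ext; intros n; now rewrite H. Qed.

Lemma CSeries_shift_zero (a : nat -> C) : a O = 0%C -> CSeries (fun k => a (S k)) = CSeries a.
Proof.
  intros H0. unfold CSeries. f_equal;
  [apply (Series_shift_zero (fun i => fst (a i))) | apply (Series_shift_zero (fun i => snd (a i)))];
  now rewrite H0.
Qed.

Lemma is_seriesC_unique (a : nat -> C) (l1 l2 : C) : is_seriesC a l1 -> is_seriesC a l2 -> l1 = l2.
Proof. apply filterlim_locally_unique. Qed.

Lemma sum_n_fst (a : nat -> C) n : fst (sum_n a n) = sum_n (fun i => fst (a i)) n.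
Proof. induction n as [|n IH]; [now rewrite !sum_O | rewrite !sum_Sn, <- IH; reflexivity]. Qed.

Lemma sum_n_snd (a : nat -> C) n : snd (sum_n a n) = sum_n (fun i => snd (a i)) n.
Proof. induction n as [|n IH]; [now rewrite !sum_O | rewrite !sum_Sn, <- IH; reflexivity]. Qed.

Lemma CSeries_unique (a : nat -> C) (l : C) : is_seriesC a l -> CSeries a = l.
Proof.
  intros H. destruct l as [l1 l2]. unfold CSeries. f_equal; apply is_series_unique.
  - eapply filterlim_ext; [intros n; apply sum_n_fst|].
    eapply filterlim_comp; [exact H | apply (continuous_fst l1 l2)].
  - eapply filterlim_ext; [intros n; apply sum_n_snd|].
    eapply filterlim_comp; [exact H | apply (continuous_snd l1 l2)].
Qed.

Lemma is_seriesC_plus (a b : nat -> C) (la lb : C) :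
  is_seriesC a la -> is_seriesC b lb -> is_seriesC (fun n => a n + b n)%C (la + lb)%C.
Proof. intros Ha Hb. exact (is_series_plus a b la lb Ha Hb). Qed.

Lemma is_seriesC_scal (c : C) (a : nat -> C) (l : C) :
  is_seriesC a l -> is_seriesC (fun n => c * a n)%C (c * l)%C.
Proof. intros H. exact (is_series_scal_l c a l H). Qed.

Lemma is_seriesC_minus (a b : nat -> C) (la lb : C) :
  is_seriesC a la -> is_seriesC b lb -> is_seriesC (fun n => a n - b n)%C (la - lb)%C.
Proof. intros Ha Hb. exact (is_series_minus a b la lb Ha Hb). Qed.

Lemma CSeries_scal (k : C) (a : nat -> C) (l : C) :
  is_seriesC a l -> CSeries (fun n => k * a n)%C = (k * CSeries a)%C.
Proof.
  intros H. rewrite (CSeries_unique _ _ H). apply CSeries_unique, is_seriesC_scal, H.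
Qed.

Lemma is_seriesC_unshift (a : nat -> C) (l : C) :
  is_seriesC a l -> is_seriesC (fun k => a (S k)) (l - a O)%C.
Proof.
  intros H. apply is_series_incr_1.
  match goal with |- is_series _ ?X => replace X with l end; [exact H |].
  change (l = (l - a O) + a O)%C. ring.
Qed.

Lemma is_seriesC_zero : is_seriesC (fun _ => RtoC 0) (RtoC 0).
Proof.
  apply (filterlim_ext (fun _ => zero)).
  - intros n. symmetry. apply (sum_n_m_const_zero (G := C_AbelianMonoid)).
  - apply filterlim_const.
Qed.

Lemma is_seriesC_shift (a : nat -> C) (l : C) : is_seriesC (fun k => a (S k)) l -> is_seriesC a (a O + l)%C.
Proof.
  intros H. apply is_series_decr_1.
  match goal with |- is_series _ ?X => replace X with l end; [exact H |].
  change (l = (a O + l) - a O)%C. ring.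
Qed.

Lemma Cmod_normC (x : C) : Cmod x = @norm C_AbsRing C_NormedModule x.
Proof. reflexivity. Qed.

Lemma Cmod_sum_n_le (a : nat -> C) (b : nat -> R) :
  (forall n, Cmod (a n) <= b n) -> forall N, Cmod (sum_n a N) <= sum_n b N.
Proof.
  intros H N. rewrite Cmod_normC. eapply Rle_trans; [exact (@norm_sum_n_m C_AbsRing C_NormedModule a O N)|].
  apply sum_n_m_le. intros k. rewrite <- Cmod_normC. apply H.
Qed.

Lemma is_seriesC_norm_le (a : nat -> C) (l : C) (b : nat -> R) (B : R) :
  is_seriesC a l -> is_series b B -> (forall n, Cmod (a n) <= b n) -> Cmod l <= B.
Proof.
  intros Ha Hb H.
  assert (Hn : is_lim_seq (fun N => Cmod (sum_n a N)) (Cmod l)).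
  { eapply filterlim_ext; [intros N; symmetry; apply Cmod_normC|].
    rewrite Cmod_normC. eapply filterlim_comp; [exact Ha | apply filterlim_norm]. }
  exact (is_lim_seq_le _ (sum_n b) (Cmod l) B (Cmod_sum_n_le a b H) Hn Hb).
Qed.

Lemma is_seriesC_CSeries (a : nat -> C) (b : nat -> R) :
  (forall n, Cmod (a n) <= b n) -> ex_series b -> is_seriesC a (CSeries a).
Proof.
  intros H Hb. destruct (@ex_series_le C_AbsRing C_CompleteNormedModule a b) as [l Hl].
  - intros n. rewrite <- Cmod_normC. apply H.
  - exact Hb.
  - now rewrite (CSeries_unique a l Hl).
Qed.

Lemma is_seriesC_of_dist (x : nat -> C) (l : C) (t : nat -> R) :
  (forall N, Cmod (sum_n x N - l) <= t N) -> is_lim_seq t 0 -> is_seriesC x l.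
Proof.
  intros H Ht. apply filterlim_locally_ball_norm. intros eps.
  destruct (proj2 (is_lim_seq_spec t 0) Ht eps) as [N0 HN0]. exists N0. intros N HN.
  specialize (HN0 N HN). change (Cmod (sum_n x N - l) < eps).
  eapply Rle_lt_trans; [apply H|]. apply Rabs_def2 in HN0. lra.
Qed.

Lemma is_seriesC_geom (u : C) : Cmod u < 1 -> is_seriesC (fun n => u ^ n)%C (/ (1 - u))%C.
Proof.
  intros Hu.
  assert (H1u : (1 - u)%C <> 0%C).
  { intros E. assert (Eu : u = 1%C) by (replace u with (1 - (1 - u))%C by ring; rewrite E; ring).
    rewrite Eu, Cmod_1 in Hu. lra. }
  apply (is_seriesC_of_dist _ _ (fun N => Cmod u ^ S N / Cmod (1 - u))).
  - intros N. right.
    assert (E : (sum_n (fun n => u ^ n) N - / (1 - u) = - u ^ S N / (1 - u))%C).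
    { induction N as [|N IH].
      - rewrite sum_O. simpl. field. exact H1u.
      - rewrite sum_Sn. change (plus ?x ?y) with (x + y)%C.
        replace (sum_n (fun n => u ^ n) N + u ^ S N - / (1 - u))%C
          with ((sum_n (fun n => u ^ n) N - / (1 - u)) + u ^ S N)%C by ring.
        rewrite IH. simpl. field. exact H1u. }
    rewrite E, Cmod_div, Cmod_opp, Cmod_pow by exact H1u. reflexivity.
  - apply (is_lim_seq_ext (fun N => / Cmod (1 - u) * Cmod u ^ S N)).
    + intros N. unfold Rdiv. apply Rmult_comm.
    + replace 0 with (/ Cmod (1 - u) * 0) by ring. apply is_lim_seq_mult'; [apply is_lim_seq_const|].
      apply (is_lim_seq_incr_1 (fun N => Cmod u ^ N)). apply is_lim_seq_geom.
      rewrite Rabs_pos_eq; [exact Hu | apply Cmod_ge_0].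
Qed.

Lemma sum_n_RtoC (x : nat -> R) N : sum_n (fun n => RtoC (x n)) N = RtoC (sum_n x N).
Proof.
  induction N as [|N IH]; [now rewrite !sum_O|].
  rewrite !sum_Sn, IH. symmetry. apply RtoC_plus.
Qed.

Lemma is_seriesC_RtoC (x : nat -> R) (l : R) :
  is_series x l -> is_seriesC (fun n => RtoC (x n)) (RtoC l).
Proof.
  intros H. apply (is_seriesC_of_dist _ _ (fun N => Rabs (sum_n x N - l))).
  - intros N. rewrite sum_n_RtoC, <- RtoC_minus, Cmod_R. apply Rle_refl.
  - apply (is_lim_seq_abs_0 (fun N => sum_n x N - l)). replace 0 with (l - l) by ring.
    apply is_lim_seq_minus'; [exact H | apply is_lim_seq_const].
Qed.

(** * Real series and interchange of summations *)

Lemma is_series_Rscal_l (k : R) (a : nat -> R) (l : R) :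
  is_series a l -> is_series (fun n => k * a n) (k * l).
Proof. exact (is_series_scal_l k a l). Qed.

Lemma ex_series_Rscal_l (k : R) (a : nat -> R) : ex_series a -> ex_series (fun n => k * a n).
Proof. intros [l H]. exists (k * l). exact (is_series_scal_l _ _ _ H). Qed.

Lemma ex_series_Rscal_r (k : R) (a : nat -> R) : ex_series a -> ex_series (fun n => a n * k).
Proof. intros [l H]. exists (l * k). exact (is_series_scal_r _ _ _ H). Qed.

Lemma is_series_sum_n_swap {K : AbsRing} {V : NormedModule K} (a : nat -> nat -> V)
    (l : nat -> V) N :
  (forall i, is_series (a i) (l i)) -> is_series (fun j => sum_n (fun i => a i j) N) (sum_n l N).
Proof.
  intros H. induction N as [|N IH].
  - rewrite sum_O. eapply is_series_ext; [|apply H]. intros j. now rewrite sum_O.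
  - rewrite sum_Sn. eapply is_series_ext; [|apply (is_series_plus _ _ _ _ IH (H (S N)))].
    intros j. now rewrite sum_Sn.
Qed.

Lemma sum_n_le_Series (x : nat -> R) :
  (forall n, 0 <= x n) -> ex_series x -> forall N, sum_n x N <= Series x.
Proof.
  intros Hx Hex N. apply (is_lim_seq_incr_compare (sum_n x)).
  - apply Series_correct, Hex.
  - intros n. rewrite sum_Sn. specialize (Hx (S n)). simpl. unfold plus. simpl. lra.
Qed.

Lemma sum_n_nonneg (x : nat -> R) : (forall n, 0 <= x n) -> forall N, 0 <= sum_n x N.
Proof.
  intros Hx N. eapply Rle_trans; [|apply (sum_n_m_le (fun _ => 0)); intros; apply Hx].
  rewrite sum_n_m_const, Rmult_0_r. lra.
Qed.

Lemma term_le_Series (x : nat -> R) :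
  (forall n, 0 <= x n) -> ex_series x -> forall n, x n <= Series x.
Proof.
  intros Hx Hex n. eapply Rle_trans; [|apply (sum_n_le_Series x Hx Hex n)].
  destruct n as [|n]; [rewrite sum_O; lra|].
  rewrite sum_Sn. pose proof (sum_n_nonneg x Hx n). simpl. unfold plus. simpl. lra.
Qed.

Lemma Series_nonneg (x : nat -> R) : (forall n, 0 <= x n) -> ex_series x -> 0 <= Series x.
Proof. intros Hx Hex. eapply Rle_trans; [apply (Hx O)|]. now apply term_le_Series. Qed.

Lemma Series_sum_n_swap (x : nat -> nat -> R) N :
  (forall i, ex_series (x i)) ->
  Series (fun j => sum_n (fun i => x i j) N) = sum_n (fun i => Series (x i)) N.
Proof.
  intros H. apply is_series_unique, (is_series_sum_n_swap (V := R_NormedModule)).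
  intros i. now apply Series_correct.
Qed.

Lemma Cmod_tail_le (x : nat -> C) (X : C) (y : nat -> R) (Y : R) N :
  is_seriesC x X -> is_series y Y -> (forall n, Cmod (x n) <= y n) ->
  Cmod (sum_n x N - X) <= Y - sum_n y N.
Proof.
  intros Hx Hy H.
  assert (Tx : is_seriesC (fun k => x (S N + k)%nat) (X - sum_n x N)%C).
  { apply is_series_incr_n; [lia|].
    match goal with |- is_series _ ?Z => replace Z with X; [exact Hx|] end.
    change (X = (X - sum_n x N) + sum_n x N)%C. ring. }
  assert (Ty : is_series (fun k => y (S N + k)%nat) (Y - sum_n y N)).
  { apply is_series_incr_n; [lia|].
    match goal with |- is_series _ ?Z => replace Z with Y; [exact Hy|] end.
    change (Y = (Y - sum_n y N) + sum_n y N). ring. }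
  rewrite <- Cmod_opp. replace (- (sum_n x N - X))%C with (X - sum_n x N)%C by ring.
  apply (is_seriesC_norm_le _ _ _ _ Tx Ty). intros n. apply H.
Qed.

Section Fubini.

Variable b : nat -> nat -> R.
Hypothesis b_nonneg : forall i j, 0 <= b i j.
Hypothesis col_ex : forall j, ex_series (fun i => b i j).
Hypothesis cols_ex : ex_series (fun j => Series (fun i => b i j)).

Let D j := Series (fun i => b i j).

Lemma entry_le_Series_col i j : b i j <= D j.
Proof. apply (term_le_Series (fun i => b i j)); auto. Qed.

Lemma ex_series_row i : ex_series (b i).
Proof.
  apply (@ex_series_le R_AbsRing R_CompleteNormedModule _ D); [|exact cols_ex].
  intros j. change (Rabs (b i j) <= D j). rewrite Rabs_pos_eq by apply b_nonneg.
  apply entry_le_Series_col.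
Qed.

Lemma is_series_swap_nonneg :
  is_series (fun i => Series (b i)) (Series D).
Proof.
  set (B i := Series (b i)).
  assert (HB : forall i, 0 <= B i) by (intros i; apply Series_nonneg; [auto | apply ex_series_row]).
  assert (Hup : forall N, sum_n B N <= Series D).
  { intros N. unfold B. rewrite <- Series_sum_n_swap by apply ex_series_row.
    apply Series_le; [|exact cols_ex]. intros j. split.
    - apply sum_n_nonneg. intros; apply b_nonneg.
    - apply (sum_n_le_Series (fun i => b i j)); auto. }
  destruct (ex_finite_lim_seq_incr (sum_n B) (Series D)) as [l Hl]; [| exact Hup |].
  { intros n. rewrite sum_Sn. specialize (HB (S n)). simpl. unfold plus. simpl. lra. }
  assert (Hlow : forall J, sum_n D J <= l).
  { intros J. unfold D. rewrite <- Series_sum_n_swap by (intros; apply col_ex).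
    rewrite <- (is_series_unique B l Hl). apply Series_le; [|exists l; exact Hl].
    intros i. split.
    - apply sum_n_nonneg. intros; apply b_nonneg.
    - apply sum_n_le_Series; [apply b_nonneg | apply ex_series_row]. }
  replace (Series D) with l; [exact Hl|].
  apply Rle_antisym.
  - apply (is_lim_seq_le (sum_n B) (fun _ => Series D) l (Series D) Hup Hl (is_lim_seq_const _)).
  - apply (is_lim_seq_le (sum_n D) (fun _ => l) (Series D) l Hlow).
    + apply Series_correct, cols_ex.
    + apply is_lim_seq_const.
Qed.

Lemma is_seriesC_swap (a : nat -> nat -> C) :
  (forall i j, Cmod (a i j) <= b i j) ->
  is_seriesC (fun i => CSeries (a i)) (CSeries (fun j => CSeries (fun i => a i j))).
Proof.
  intros Hab. set (T j := CSeries (fun i => a i j)).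
  assert (HD : forall j, is_series (fun i => b i j) (D j)) by (intros; apply Series_correct, col_ex).
  assert (HT : forall j, is_seriesC (fun i => a i j) (T j))
    by (intros j; apply (is_seriesC_CSeries _ (fun i => b i j)); auto).
  assert (HL : is_seriesC T (CSeries T)).
  { apply (is_seriesC_CSeries _ D); [|exact cols_ex].
    intros j. apply (is_seriesC_norm_le _ _ _ _ (HT j) (HD j)). auto. }
  assert (HR : forall i, is_seriesC (a i) (CSeries (a i))).
  { intros i. apply (is_seriesC_CSeries _ (b i)); [auto | apply ex_series_row]. }
  assert (HB := is_series_swap_nonneg).
  apply (is_seriesC_of_dist _ _ (fun N => Series D - sum_n (fun i => Series (b i)) N)).
  - intros N. apply (is_seriesC_norm_le (fun j => sum_n (fun i => a i j) N - T j)%C _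
      (fun j => D j - sum_n (fun i => b i j) N)).
    + apply is_seriesC_minus; [|exact HL].
      exact (is_series_sum_n_swap (V := C_NormedModule) a _ N HR).
    + exact (is_series_minus _ _ _ _ (Series_correct _ cols_ex)
        (is_series_sum_n_swap (V := R_NormedModule) b _ N (fun i => Series_correct _ (ex_series_row i)))).
    + intros j. apply (Cmod_tail_le _ _ _ _ N (HT j) (HD j)). auto.
  - replace 0 with (Series D - Series D) by ring.
    apply is_lim_seq_minus'; [apply is_lim_seq_const | exact HB].
Qed.

End Fubini.

(** * Power series *)

Lemma ex_series_succ_sq_pow r : 0 <= r < 1 -> ex_series (fun n => INR (S n) ^ 2 * r ^ n).
Proof.
  intros Hr. set (t := (1 + r) / 2).
  assert (Ht : 0 < t < 1) by (unfold t; lra).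
  apply (@ex_series_le R_AbsRing R_CompleteNormedModule _ (fun n => INR (S n) ^ 2 * t ^ n)).
  - intros n. change (Rabs (INR (S n) ^ 2 * r ^ n) <= INR (S n) ^ 2 * t ^ n).
    rewrite Rabs_pos_eq by (apply Rmult_le_pos; [apply pow2_ge_0 | apply pow_le; lra]).
    apply Rmult_le_compat_l; [apply pow2_ge_0|]. apply pow_incr. split; [lra|]. unfold t. lra.
  - apply (ex_series_ext (fun n => Rabs (INR (S n) ^ 2 * t ^ n))).
    { intros n. apply Rabs_pos_eq. apply Rmult_le_pos; [apply pow2_ge_0 | apply pow_le; lra]. }
    apply (ex_series_DAlembert _ t); [lra| |].
    + intros n. apply Rmult_integral_contrapositive_currified.
      * apply pow_nonzero. apply not_0_INR. lia.
      * apply pow_nonzero. lra.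
    + assert (H0 : is_lim_seq (fun n => / INR (S n)) 0).
      { replace (Finite 0) with (Rbar_inv p_infty) by reflexivity.
        apply is_lim_seq_inv; [|discriminate].
        apply (is_lim_seq_incr_1 INR p_infty). apply is_lim_seq_INR. }
      apply (is_lim_seq_ext (fun n => (1 + / INR (S n)) * (1 + / INR (S n)) * t)).
      * intros n. assert (0 < INR (S n)) by (apply lt_0_INR; lia).
        rewrite (S_INR (S n)), Rabs_pos_eq.
        -- change (t ^ S n) with (t * t ^ n). field. split; [apply pow_nonzero|]; lra.
        -- apply Rmult_le_pos.
           ++ apply Rmult_le_pos; [apply pow2_ge_0 | apply pow_le; lra].
           ++ apply Rlt_le, Rinv_0_lt_compat, Rmult_lt_0_compat; [apply pow_lt; lra | apply pow_lt; lra].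
      * assert (H1 : is_lim_seq (fun n => 1 + / INR (S n)) (1 + 0))
          by (apply is_lim_seq_plus'; [apply is_lim_seq_const | exact H0]).
        assert (H2 := is_lim_seq_mult' _ _ _ _ (is_lim_seq_mult' _ _ _ _ H1 H1) (is_lim_seq_const t)).
        replace ((1 + 0) * (1 + 0) * t) with t in H2 by ring. exact H2.
Qed.

Lemma ex_series_succ_pow r : 0 <= r < 1 -> ex_series (fun n => INR (S n) * r ^ n).
Proof.
  intros Hr. refine (@ex_series_le R_AbsRing R_CompleteNormedModule _ _ _ (ex_series_succ_sq_pow r Hr)).
  intros n. change (Rabs (INR (S n) * r ^ n) <= INR (S n) ^ 2 * r ^ n).
  assert (1 <= INR (S n)) by (apply (le_INR 1); lia).
  assert (0 <= r ^ n) by (apply pow_le; lra).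
  rewrite Rabs_pos_eq by nra. apply Rmult_le_compat_r; [assumption | nra].
Qed.

Lemma pow_sub_linear_bound (x y : C) (r : R) n :
  Cmod x <= r -> Cmod y <= r ->
  r * Cmod (y ^ S n - x ^ S n - INR (S n) * x ^ n * (y - x))%C
    <= INR (S n) ^ 2 * r ^ n * Cmod (y - x) ^ 2.
Proof.
  intros Hx Hy. assert (Hr : 0 <= r) by (eapply Rle_trans; [apply Cmod_ge_0 | exact Hx]).
  pose proof (pow2_ge_0 (Cmod (y - x))) as Hc.
  induction n as [|n IH].
  - replace (y ^ 1 - x ^ 1 - INR 1 * x ^ 0 * (y - x))%C with (RtoC 0)
      by (simpl; apply injective_projections; simpl; ring).
    rewrite Cmod_0, Rmult_0_r. apply Rmult_le_pos; [|exact Hc]. simpl. lra.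
  - set (D := (y ^ S n - x ^ S n - INR (S n) * x ^ n * (y - x))%C) in *.
    (* The remainder satisfies D_{n+2} = y D_{n+1} + (n+1) x^n (y-x)^2. *)
    replace (y ^ S (S n) - x ^ S (S n) - INR (S (S n)) * x ^ S n * (y - x))%C
      with (y * D + INR (S n) * x ^ n * ((y - x) * (y - x)))%C
      by (unfold D; rewrite (S_INR (S n)), RtoC_plus; simpl; ring).
    assert (Htri : Cmod (y * D + INR (S n) * x ^ n * ((y - x) * (y - x)))%C
                   <= r * Cmod D + INR (S n) * r ^ n * Cmod (y - x) ^ 2).
    { eapply Rle_trans; [apply Cmod_triangle|].
      rewrite !Cmod_mult, Cmod_R, Rabs_pos_eq, Cmod_pow by apply pos_INR.
      replace (Cmod (y - x) ^ 2) with (Cmod (y - x) * Cmod (y - x)) by ring.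
      apply Rplus_le_compat; [apply Rmult_le_compat_r; [apply Cmod_ge_0 | exact Hy]|].
      apply Rmult_le_compat_r; [apply Rmult_le_pos; apply Cmod_ge_0|].
      apply Rmult_le_compat_l; [apply pos_INR|]. apply pow_incr. split; [apply Cmod_ge_0 | exact Hx]. }
    assert (HrD : r * (r * Cmod D) <= r * (INR (S n) ^ 2 * r ^ n * Cmod (y - x) ^ 2))
      by (apply Rmult_le_compat_l; assumption).
    eapply Rle_trans; [apply Rmult_le_compat_l; [exact Hr | exact Htri]|].
    rewrite (S_INR (S n)). simpl (r ^ S n).
    set (X := r * r ^ n * Cmod (y - x) ^ 2).
    assert (HX : 0 <= X) by (apply Rmult_le_pos; [apply Rmult_le_pos; [|apply pow_le]|]; assumption).
    pose proof (pos_INR (S n)).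
    replace (r * (INR (S n) ^ 2 * r ^ n * Cmod (y - x) ^ 2)) with (INR (S n) ^ 2 * X) in HrD
      by (unfold X; ring).
    replace (r * (r * Cmod D + INR (S n) * r ^ n * Cmod (y - x) ^ 2))
      with (r * (r * Cmod D) + INR (S n) * X) by (unfold X; ring).
    replace ((INR (S n) + 1) ^ 2 * (r * r ^ n) * Cmod (y - x) ^ 2) with ((INR (S n) + 1) ^ 2 * X)
      by (unfold X; ring).
    nra.
Qed.

Lemma is_derive_of_quadratic_bound (f : C -> C) (x l : C) (d K : R) :
  0 < d ->
  (forall y, Cmod (y - x) < d -> Cmod (f y - f x - (y - x) * l)%C <= K * Cmod (y - x) ^ 2) ->
  @is_derive C_AbsRing C_NormedModule f x l.
Proof.
  intros Hd H. split; [apply is_linear_scal_l|].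
  intros x0 Hx0.
  pose proof (@is_filter_lim_locally_unique C_AbsRing (AbsRing_NormedModule C_AbsRing) x x0 Hx0).
  subst x0. intros eps.
  assert (He : 0 < Rmin d (eps / (Rabs K + 1))).
  { apply Rmin_pos; [exact Hd|]. apply Rdiv_lt_0_compat; [apply cond_pos|].
    pose proof (Rabs_pos K). lra. }
  exists (mkposreal _ He). intros y Hy.
  change (Cmod (y - x) < Rmin d (eps / (Rabs K + 1))) in Hy.
  change (Cmod (f y - f x - (y - x) * l) <= eps * Cmod (y - x)).
  pose proof (Cmod_ge_0 (y - x)). pose proof (Rabs_pos K). pose proof (cond_pos eps).
  assert (Hy2 : (Rabs K + 1) * Cmod (y - x) <= eps).
  { assert (Cmod (y - x) <= eps / (Rabs K + 1)) by (pose proof (Rmin_r d (eps / (Rabs K + 1))); lra).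
    apply (Rmult_le_compat_l (Rabs K + 1)) in H3; [|lra].
    replace ((Rabs K + 1) * (eps / (Rabs K + 1))) with (pos eps) in H3 by (field; lra). exact H3. }
  eapply Rle_trans; [apply H; pose proof (Rmin_l d (eps / (Rabs K + 1))); lra|].
  pose proof (Rle_abs K). simpl. nra.
Qed.

Lemma is_seriesC_pow_bounded (a : nat -> C) (M : R) (y : C) :
  (forall n, Cmod (a n) <= M) -> Cmod y < 1 ->
  is_seriesC (fun n => y ^ n * a n)%C (CSeries (fun n => y ^ n * a n)%C).
Proof.
  intros Ha Hy. apply (is_seriesC_CSeries _ (fun n => M * Cmod y ^ n)).
  - intros n. rewrite Cmod_mult, Cmod_pow, Rmult_comm.
    apply Rmult_le_compat_r; [apply pow_le, Cmod_ge_0 | apply Ha].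
  - apply ex_series_Rscal_l, ex_series_geom. rewrite Rabs_pos_eq; [exact Hy | apply Cmod_ge_0].
Qed.

Lemma is_seriesC_pow_deriv_bounded (a : nat -> C) (M : R) (x : C) :
  (forall n, Cmod (a n) <= M) -> Cmod x < 1 ->
  is_seriesC (fun n => x ^ n * (INR (S n) * a (S n)))%C
    (CSeries (fun n => x ^ n * (INR (S n) * a (S n)))%C).
Proof.
  intros Ha Hx. apply (is_seriesC_CSeries _ (fun n => M * (INR (S n) * Cmod x ^ n))).
  - intros n. rewrite !Cmod_mult, Cmod_pow, Cmod_R, Rabs_pos_eq by apply pos_INR.
    replace (Cmod x ^ n * (INR (S n) * Cmod (a (S n))))
      with ((INR (S n) * Cmod x ^ n) * Cmod (a (S n))) by ring.
    rewrite (Rmult_comm M). apply Rmult_le_compat_l; [|apply Ha].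
    apply Rmult_le_pos; [apply pos_INR | apply pow_le, Cmod_ge_0].
  - apply ex_series_Rscal_l, ex_series_succ_pow. split; [apply Cmod_ge_0 | exact Hx].
Qed.

Lemma pseries_remainder_bound (a : nat -> C) (M r : R) (x y : C) :
  (forall n, Cmod (a n) <= M) -> Cmod x <= r -> Cmod y <= r -> 0 < r < 1 ->
  Cmod (CSeries (fun n => y ^ n * a n) - CSeries (fun n => x ^ n * a n)
        - (y - x) * CSeries (fun n => x ^ n * (INR (S n) * a (S n))))%C
    <= M / r * Series (fun n => INR (S n) ^ 2 * r ^ n) * Cmod (y - x) ^ 2.
Proof.
  intros Ha Hx Hy Hr.
  pose proof (is_seriesC_unshift _ _ (is_seriesC_pow_bounded a M y Ha ltac:(lra))) as Sy.
  pose proof (is_seriesC_unshift _ _ (is_seriesC_pow_bounded a M x Ha ltac:(lra))) as Sx.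
  pose proof (is_seriesC_pow_deriv_bounded a M x Ha ltac:(lra)) as Sd.
  pose proof (is_seriesC_minus _ _ _ _ (is_seriesC_minus _ _ _ _ Sy Sx)
                (is_seriesC_scal (y - x) _ _ Sd)) as Srem.
  match type of Srem with is_seriesC _ ?L =>
    replace (CSeries (fun n => y ^ n * a n) - CSeries (fun n => x ^ n * a n)
             - (y - x) * CSeries (fun n => x ^ n * (INR (S n) * a (S n))))%C with L by (simpl; ring) end.
  set (S2 := Series (fun n => INR (S n) ^ 2 * r ^ n)).
  assert (HB : is_series (fun n => M / r * Cmod (y - x) ^ 2 * (INR (S n) ^ 2 * r ^ n))
                         (M / r * Cmod (y - x) ^ 2 * S2))
    by (apply is_series_Rscal_l, Series_correct, ex_series_succ_sq_pow; lra).
  replace (M / r * S2 * Cmod (y - x) ^ 2) with (M / r * Cmod (y - x) ^ 2 * S2) by ring.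
  apply (is_seriesC_norm_le _ _ _ _ Srem HB). intros n. simpl (_ ^ S n)%C.
  replace (y * y ^ n * a (S n) - x * x ^ n * a (S n) - (y - x) * (x ^ n * (INR (S n) * a (S n))))%C
    with (a (S n) * (y ^ S n - x ^ S n - INR (S n) * x ^ n * (y - x)))%C by (simpl; ring).
  rewrite Cmod_mult.
  assert (HD : Cmod (y ^ S n - x ^ S n - INR (S n) * x ^ n * (y - x))%C
               <= INR (S n) ^ 2 * r ^ n * Cmod (y - x) ^ 2 / r).
  { apply (Rmult_le_reg_l r); [lra|]. unfold Rdiv.
    rewrite (Rmult_comm _ (/ r)), <- Rmult_assoc, Rinv_r, Rmult_1_l by lra.
    exact (pow_sub_linear_bound x y r n Hx Hy). }
  eapply Rle_trans; [apply Rmult_le_compat; [apply Cmod_ge_0 | apply Cmod_ge_0 | apply Ha | exact HD]|].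
  right. unfold Rdiv. ring.
Qed.

Lemma is_derive_pseries (a : nat -> C) (M : R) (x : C) :
  (forall n, Cmod (a n) <= M) -> Cmod x < 1 ->
  @is_derive C_AbsRing C_NormedModule (fun y => CSeries (fun n => y ^ n * a n)%C) x
    (CSeries (fun n => x ^ n * (INR (S n) * a (S n)))%C).
Proof.
  intros Ha Hx. pose proof (Cmod_ge_0 x).
  set (r := (1 + Cmod x) / 2).
  apply (is_derive_of_quadratic_bound _ _ _ ((1 - Cmod x) / 2)
           (M / r * Series (fun n => INR (S n) ^ 2 * r ^ n))); [lra|].
  intros y Hyx. apply pseries_remainder_bound; [exact Ha | unfold r; lra | | unfold r; lra].
  replace y with ((y - x) + x)%C by ring. eapply Rle_trans; [apply Cmod_triangle|]. unfold r. lra.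
Qed.

Lemma is_derive_C_unique (f : C -> C) (x l1 l2 : C) :
  @is_derive C_AbsRing C_NormedModule f x l1 -> @is_derive C_AbsRing C_NormedModule f x l2 -> l1 = l2.
Proof. intros H1 H2. now rewrite <- (is_C_derive_unique _ _ _ H1), (is_C_derive_unique _ _ _ H2). Qed.

Lemma Cderive_correct (f : C -> C) (x l : C) :
  @is_derive C_AbsRing C_NormedModule f x l -> Cderive f x = l.
Proof.
  intros H. unfold Cderive. destruct excluded_middle_informative as [Hex | Hn].
  - destruct constructive_indefinite_description as [l' Hl']. simpl.
    exact (is_derive_C_unique f x l' l Hl' H).
  - exfalso. apply Hn. exists l. exact H.
Qed.

(** * Double power series *)

Definition dps (c : nat -> nat -> C) (u v : C) : C :=
  CSeries (fun n => u ^ n * CSeries (fun b => c n b * v ^ b))%C.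

(* Convergence of the iterated series, rows first.  No absolute convergence is required, so
   identities between generating functions follow from identities between coefficients. *)
Definition is_dps (c : nat -> nat -> C) (u v l : C) : Prop :=
  exists a : nat -> C, (forall n, is_seriesC (fun b => c n b * v ^ b)%C (a n)) /\
                       is_seriesC (fun n => u ^ n * a n)%C l.

Definition poly_bounded (c : nat -> nat -> C) (M : R) : Prop :=
  forall n b, Cmod (c n b) <= M * (INR (S n) * INR (S b)).

Definition shift_u (c : nat -> nat -> C) n b : C := match n with O => RtoC 0 | S m => c m b end.
Definition shift_v (c : nat -> nat -> C) n b : C := match b with O => RtoC 0 | S k => c n k end.
Definition deriv_u (c : nat -> nat -> C) n b : C := (INR (S n) * c (S n) b)%C.
Definition deriv_v (c : nat -> nat -> C) n b : C := (INR (S b) * c n (S b))%C.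
Definition euler_u (c : nat -> nat -> C) n b : C := (INR n * c n b)%C.
Definition euler_v (c : nat -> nat -> C) n b : C := (INR b * c n b)%C.

Lemma dps_ext c c' u v : (forall n b, c n b = c' n b) -> dps c u v = dps c' u v.
Proof.
  intros E. apply CSeries_ext. intros n. f_equal. apply CSeries_ext. intros b. now rewrite E.
Qed.

Lemma is_dps_unique c u v l1 l2 : is_dps c u v l1 -> is_dps c u v l2 -> l1 = l2.
Proof.
  intros [a1 [Ha1 H1]] [a2 [Ha2 H2]].
  apply (is_seriesC_unique _ _ _ H1). eapply is_series_ext; [|exact H2].
  intros n. now rewrite (is_seriesC_unique _ _ _ (Ha1 n) (Ha2 n)).
Qed.

Lemma is_dps_ext c c' u v l : (forall n b, c n b = c' n b) -> is_dps c u v l -> is_dps c' u v l.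
Proof.
  intros E [a [Ha H]]. exists a. split; [|exact H].
  intros n. eapply is_series_ext; [|apply Ha]. intros b. simpl. now rewrite E.
Qed.

Lemma is_dps_plus c1 c2 u v l1 l2 :
  is_dps c1 u v l1 -> is_dps c2 u v l2 -> is_dps (fun n b => c1 n b + c2 n b)%C u v (l1 + l2)%C.
Proof.
  intros [a1 [Ha1 H1]] [a2 [Ha2 H2]]. exists (fun n => a1 n + a2 n)%C. split.
  - intros n. eapply is_series_ext; [|apply (is_seriesC_plus _ _ _ _ (Ha1 n) (Ha2 n))].
    intros b. simpl. ring.
  - eapply is_series_ext; [|apply (is_seriesC_plus _ _ _ _ H1 H2)]. intros n. simpl. ring.
Qed.

Lemma is_dps_scal k c u v l : is_dps c u v l -> is_dps (fun n b => k * c n b)%C u v (k * l)%C.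
Proof.
  intros [a [Ha H]]. exists (fun n => k * a n)%C. split.
  - intros n. eapply is_series_ext; [|apply (is_seriesC_scal k _ _ (Ha n))]. intros b. simpl. ring.
  - eapply is_series_ext; [|apply (is_seriesC_scal k _ _ H)]. intros n. simpl. ring.
Qed.

Lemma is_dps_shift_u c u v l : is_dps c u v l -> is_dps (shift_u c) u v (u * l)%C.
Proof.
  intros [a [Ha H]]. exists (fun n => match n with O => RtoC 0 | S m => a m end). split.
  - intros [|m]; simpl.
    + eapply is_series_ext; [|apply is_seriesC_zero]. intros b. simpl. ring.
    + apply Ha.
  - replace (u * l)%C with (u ^ 0 * 0 + u * l)%C by ring. apply is_seriesC_shift.
    eapply is_series_ext; [|apply (is_seriesC_scal u _ _ H)]. intros n. simpl. ring.
Qed.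

Lemma is_dps_shift_v c u v l : is_dps c u v l -> is_dps (shift_v c) u v (v * l)%C.
Proof.
  intros [a [Ha H]]. exists (fun n => v * a n)%C. split.
  - intros n. replace (v * a n)%C with (shift_v c n 0 * v ^ 0 + v * a n)%C by (simpl; ring).
    apply is_seriesC_shift. eapply is_series_ext; [|apply (is_seriesC_scal v _ _ (Ha n))].
    intros b. simpl. ring.
  - eapply is_series_ext; [|apply (is_seriesC_scal v _ _ H)]. intros n. simpl. ring.
Qed.

Lemma is_dps_euler_u c u v l : is_dps (deriv_u c) u v l -> is_dps (euler_u c) u v (u * l)%C.
Proof.
  intros H. apply (is_dps_ext (shift_u (deriv_u c))); [|now apply is_dps_shift_u].
  intros [|n] b; unfold euler_u; simpl; [ring | reflexivity].
Qed.

Lemma is_dps_euler_v c u v l : is_dps (deriv_v c) u v l -> is_dps (euler_v c) u v (v * l)%C.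
Proof.
  intros H. apply (is_dps_ext (shift_v (deriv_v c))); [|now apply is_dps_shift_v].
  intros n [|b]; unfold euler_v; simpl; [ring | reflexivity].
Qed.

Lemma is_dps_geom u v : Cmod u < 1 ->
  is_dps (fun _ b => match b with 1%nat => RtoC 1 | _ => RtoC 0 end) u v (v / (1 - u))%C.
Proof.
  intros Hu. exists (fun _ => v). split.
  - intros n. apply (is_series_ext (fun b => match b with 1%nat => v | _ => RtoC 0 end)).
    { intros [|[|b]]; simpl; ring. }
    assert (H : is_seriesC (fun b => match b with 1%nat => v | _ => RtoC 0 end)
                           (RtoC 0 + (v + RtoC 0))%C).
    { apply (is_seriesC_shift (fun b => match b with 1%nat => v | _ => RtoC 0 end)).
      apply (is_seriesC_shift (fun b => match b with O => v | _ => RtoC 0 end)).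
      exact is_seriesC_zero. }
    replace (RtoC 0 + (v + RtoC 0))%C with v in H by ring. exact H.
  - eapply is_series_ext; [|apply (is_seriesC_scal v _ _ (is_seriesC_geom u Hu))].
    intros n. simpl. ring.
Qed.

Lemma is_seriesC_poly_pow (a : nat -> C) (M : R) (y : C) :
  (forall k, Cmod (a k) <= M * INR (S k)) -> Cmod y < 1 ->
  is_seriesC (fun k => a k * y ^ k)%C (CSeries (fun k => a k * y ^ k)%C) /\
  Cmod (CSeries (fun k => a k * y ^ k)%C) <= M * Series (fun k => INR (S k) * Cmod y ^ k).
Proof.
  intros Ha Hy. pose proof (Cmod_ge_0 y).
  assert (Hb : forall k, Cmod (a k * y ^ k)%C <= M * (INR (S k) * Cmod y ^ k)).
  { intros k. rewrite Cmod_mult, Cmod_pow, <- Rmult_assoc.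
    apply Rmult_le_compat_r; [apply pow_le; lra | apply Ha]. }
  assert (Hex : ex_series (fun k => INR (S k) * Cmod y ^ k)) by (apply ex_series_succ_pow; lra).
  assert (Hs := is_seriesC_CSeries _ _ Hb (ex_series_Rscal_l M _ Hex)).
  split; [exact Hs|].
  apply (is_seriesC_norm_le _ _ _ _ Hs (is_series_scal_l M _ _ (Series_correct _ Hex)) Hb).
Qed.

Lemma dps_spec c M u v : poly_bounded c M -> Cmod u < 1 -> Cmod v < 1 ->
  (forall n, is_seriesC (fun b => c n b * v ^ b)%C (CSeries (fun b => c n b * v ^ b)%C)) /\
  is_seriesC (fun n => u ^ n * CSeries (fun b => c n b * v ^ b))%C (dps c u v).
Proof.
  intros Hc Hu Hv. set (S1 := Series (fun k => INR (S k) * Cmod v ^ k)).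
  assert (Hrow : forall n,
      is_seriesC (fun b => (c n b * v ^ b)%C) (CSeries (fun b => (c n b * v ^ b)%C)) /\
      Cmod (CSeries (fun b => (c n b * v ^ b)%C)) <= (M * S1) * INR (S n)).
  { intros n. destruct (is_seriesC_poly_pow (c n) (M * INR (S n)) v) as [H1 H2]; [|exact Hv|].
    - intros b. rewrite Rmult_assoc. apply Hc.
    - split; [exact H1|]. unfold S1. lra. }
  split; [apply Hrow|].
  destruct (is_seriesC_poly_pow (fun n => CSeries (fun b => c n b * v ^ b))%C (M * S1) u) as [H _];
    [apply Hrow | exact Hu |].
  unfold dps. rewrite (CSeries_unique _ _ (is_series_ext _ _ _ (fun n => Cmult_comm _ _) H)).
  eapply is_series_ext; [|exact H]. intros n. simpl. apply Cmult_comm.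
Qed.

Lemma is_dps_dps c M u v : poly_bounded c M -> Cmod u < 1 -> Cmod v < 1 -> is_dps c u v (dps c u v).
Proof. intros Hc Hu Hv. eexists. exact (dps_spec c M u v Hc Hu Hv). Qed.

Lemma poly_bounded_row c M n : poly_bounded c M ->
  forall b, Cmod (c n b) <= M * INR (S n) * INR (S b).
Proof. intros Hc b. rewrite Rmult_assoc. apply Hc. Qed.

Lemma poly_bounded_col c M b : poly_bounded c M ->
  forall n, Cmod (c n b) <= M * INR (S b) * INR (S n).
Proof. intros Hc n. rewrite Rmult_assoc, (Rmult_comm (INR (S b))). apply Hc. Qed.

Lemma dps_transpose c M u v : poly_bounded c M -> Cmod u < 1 -> Cmod v < 1 ->
  dps (fun n b => c b n) v u = dps c u v.
Proof.
  intros Hc Hu Hv. pose proof (Cmod_ge_0 u). pose proof (Cmod_ge_0 v).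
  assert (HM : 0 <= M).
  { pose proof (Hc O O) as Hc0. pose proof (Cmod_ge_0 (c O O)). simpl in Hc0. lra. }
  set (gu n := INR (S n) * Cmod u ^ n). set (gv b := INR (S b) * Cmod v ^ b).
  assert (Hgu : forall n, 0 <= gu n) by (intros; apply Rmult_le_pos; [apply pos_INR | apply pow_le; lra]).
  assert (Hgv : forall b, 0 <= gv b) by (intros; apply Rmult_le_pos; [apply pos_INR | apply pow_le; lra]).
  assert (Exu : ex_series gu) by (apply ex_series_succ_pow; lra).
  assert (Exv : ex_series gv) by (apply ex_series_succ_pow; lra).
  assert (Hswap := is_seriesC_swap (fun n b => M * gu n * gv b)
    ltac:(intros; apply Rmult_le_pos; [apply Rmult_le_pos|]; auto)
    ltac:(intros; apply ex_series_Rscal_r, ex_series_Rscal_l, Exu)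
    ltac:(apply (ex_series_ext (fun b => (M * Series gu) * gv b));
          [intros b; rewrite Series_scal_r, Series_scal_l; reflexivity
          | apply ex_series_Rscal_l, Exv])
    (fun n b => u ^ n * (c n b * v ^ b))%C).
  assert (Hab : forall n b, Cmod (u ^ n * (c n b * v ^ b))%C <= M * gu n * gv b).
  { intros n b. rewrite !Cmod_mult, !Cmod_pow. unfold gu, gv.
    pose proof (pow_le _ n H). pose proof (pow_le _ b H0). pose proof (Hc n b).
    pose proof (Cmod_ge_0 (c n b)).
    replace (M * (INR (S n) * Cmod u ^ n) * (INR (S b) * Cmod v ^ b))
      with (Cmod u ^ n * ((M * (INR (S n) * INR (S b))) * Cmod v ^ b)) by ring.
    apply Rmult_le_compat_l; [assumption|]. apply Rmult_le_compat_r; assumption. }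
  specialize (Hswap Hab). cbv beta in Hswap.
  assert (Erow : forall n, CSeries (fun b => u ^ n * (c n b * v ^ b))%C
                           = (u ^ n * CSeries (fun b => c n b * v ^ b))%C).
  { intros n. eapply CSeries_scal.
    apply (is_seriesC_poly_pow (c n) (M * INR (S n))); [apply poly_bounded_row, Hc | exact Hv]. }
  assert (Ecol : forall b, CSeries (fun n => u ^ n * (c n b * v ^ b))%C
                           = (v ^ b * CSeries (fun n => c n b * u ^ n))%C).
  { intros b. rewrite (CSeries_ext _ (fun n => v ^ b * (c n b * u ^ n))%C) by (intros; ring).
    eapply CSeries_scal.
    apply (is_seriesC_poly_pow (fun n => c n b) (M * INR (S b))); [apply poly_bounded_col, Hc | exact Hu]. }
  rewrite (CSeries_ext _ _ Ecol) in Hswap.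
  unfold dps. symmetry. apply CSeries_unique. eapply is_series_ext; [exact Erow | exact Hswap].
Qed.

Lemma poly_bounded_of_bounded c M : (forall n b, Cmod (c n b) <= M) -> poly_bounded c M.
Proof.
  intros Hc n b. assert (HM : 0 <= M) by (eapply Rle_trans; [apply Cmod_ge_0 | apply (Hc O O)]).
  assert (1 <= INR (S n)) by (apply (le_INR 1); lia).
  assert (1 <= INR (S b)) by (apply (le_INR 1); lia).
  eapply Rle_trans; [apply Hc|]. rewrite <- (Rmult_1_r M) at 1.
  apply Rmult_le_compat_l; [exact HM | nra].
Qed.

Lemma bounded_le_mul_succ (x M : R) k : x <= M -> 0 <= M -> x <= M * INR (S k).
Proof.
  intros Hx HM. assert (1 <= INR (S k)) by (apply (le_INR 1); lia).
  eapply Rle_trans; [exact Hx|]. rewrite <- (Rmult_1_r M) at 1.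
  apply Rmult_le_compat_l; assumption.
Qed.

Lemma poly_bounded_deriv_u c M : (forall n b, Cmod (c n b) <= M) -> poly_bounded (deriv_u c) M.
Proof.
  intros Hc n b. assert (HM : 0 <= M) by (eapply Rle_trans; [apply Cmod_ge_0 | apply (Hc O O)]).
  unfold deriv_u. rewrite Cmod_mult, Cmod_R, Rabs_pos_eq by apply pos_INR.
  replace (M * (INR (S n) * INR (S b))) with (INR (S n) * (M * INR (S b))) by ring.
  apply Rmult_le_compat_l; [apply pos_INR | now apply bounded_le_mul_succ].
Qed.

Lemma poly_bounded_deriv_v c M : (forall n b, Cmod (c n b) <= M) -> poly_bounded (deriv_v c) M.
Proof.
  intros Hc n b. assert (HM : 0 <= M) by (eapply Rle_trans; [apply Cmod_ge_0 | apply (Hc O O)]).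
  unfold deriv_v. rewrite Cmod_mult, Cmod_R, Rabs_pos_eq by apply pos_INR.
  replace (M * (INR (S n) * INR (S b))) with (INR (S b) * (M * INR (S n))) by ring.
  apply Rmult_le_compat_l; [apply pos_INR | now apply bounded_le_mul_succ].
Qed.

Lemma locally_disc (u : C) :
  Cmod u < 1 -> @locally (AbsRing_UniformSpace C_AbsRing) u (fun y => Cmod y < 1).
Proof.
  intros Hu.
  assert (Hd : 0 < 1 - Cmod u) by lra. exists (mkposreal _ Hd). intros y Hy.
  change (Cmod (y - u) < 1 - Cmod u) in Hy.
  replace y with ((y - u) + u)%C by ring. eapply Rle_lt_trans; [apply Cmod_triangle|]. simpl in Hy. lra.
Qed.

Lemma is_derive_dps_u c M u v : (forall n b, Cmod (c n b) <= M) -> Cmod u < 1 -> Cmod v < 1 ->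
  @is_derive C_AbsRing C_NormedModule (fun x => dps c x v) u (dps (deriv_u c) u v).
Proof.
  intros Hc Hu Hv. assert (HM : 0 <= M) by (eapply Rle_trans; [apply Cmod_ge_0 | apply (Hc O O)]).
  assert (Hrow : forall n,
      is_seriesC (fun b => (c n b * v ^ b)%C) (CSeries (fun b => (c n b * v ^ b)%C)) /\
      Cmod (CSeries (fun b => (c n b * v ^ b)%C)) <= M * Series (fun k => INR (S k) * Cmod v ^ k)).
  { intros n. apply is_seriesC_poly_pow; [|exact Hv]. intros b. now apply bounded_le_mul_succ. }
  assert (Hd := is_derive_pseries (fun n => CSeries (fun b => c n b * v ^ b))%C _ u
                  (fun n => proj2 (Hrow n)) Hu).
  unfold dps. match goal with |- is_derive _ _ ?L => replace L with
    (CSeries (fun n => u ^ n * (INR (S n) * CSeries (fun b => c (S n) b * v ^ b))))%C end;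
    [exact Hd|].
  apply CSeries_ext. intros n. f_equal. unfold deriv_u.
  rewrite <- (CSeries_scal _ _ _ (proj1 (Hrow (S n)))). apply CSeries_ext. intros b. ring.
Qed.

Lemma is_derive_dps_v c M u v : (forall n b, Cmod (c n b) <= M) -> Cmod u < 1 -> Cmod v < 1 ->
  @is_derive C_AbsRing C_NormedModule (fun y => dps c u y) v (dps (deriv_v c) u v).
Proof.
  intros Hc Hu Hv.
  apply (is_derive_ext_loc (fun y => dps (fun n b => c b n) y u)).
  - apply (filter_imp (fun y => Cmod y < 1)); [|now apply locally_disc].
    intros y Hy. apply (dps_transpose c M); [now apply poly_bounded_of_bounded | exact Hu | exact Hy].
  - rewrite <- (dps_transpose (deriv_v c) M u v) by (try apply poly_bounded_deriv_v; assumption).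
    exact (is_derive_dps_u (fun n b => c b n) M v u (fun n b => Hc b n) Hv Hu).
Qed.

(** * Absorption probabilities of the embedded chain *)

Section Absorption.

Variables rho q : R.
Hypothesis rho_pos : 0 < rho.
Hypothesis q_nonneg : 0 <= q.
Hypothesis q_lt_1 : q < 1.

Notation p := (absorb_prob rho q).

Lemma is_series_batch_weight : is_series (fun b => (1 - q) * q ^ b) 1.
Proof.
  assert (Hq : Rabs q < 1) by (rewrite Rabs_pos_eq; lra).
  assert (H := is_series_Rscal_l (1 - q) _ _ (is_series_geom q Hq)).
  rewrite Rinv_r in H by lra. exact H.
Qed.

Lemma batch_weight_nonneg b : 0 <= (1 - q) * q ^ b.
Proof. apply Rmult_le_pos; [lra | apply pow_le, q_nonneg]. Qed.

Lemma ex_series_batch_average (f : nat -> R) :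
  (forall b, 0 <= f b <= 1) -> ex_series (fun b => (1 - q) * q ^ b * f b).
Proof.
  intros Hf. apply (@ex_series_le R_AbsRing R_CompleteNormedModule _ (fun b => (1 - q) * q ^ b)).
  - intros b. change (Rabs ((1 - q) * q ^ b * f b) <= (1 - q) * q ^ b).
    pose proof (batch_weight_nonneg b). specialize (Hf b).
    rewrite Rabs_pos_eq by (apply Rmult_le_pos; [assumption | apply Hf]).
    rewrite <- (Rmult_1_r ((1 - q) * q ^ b)) at 2. apply Rmult_le_compat_l; [assumption | apply Hf].
  - exists 1. exact is_series_batch_weight.
Qed.

Lemma batch_average_01 (f : nat -> R) :
  (forall b, 0 <= f b <= 1) -> 0 <= Series (fun b => (1 - q) * q ^ b * f b) <= 1.
Proof.
  intros Hf.
  assert (Hb : forall b, 0 <= (1 - q) * q ^ b * f b <= (1 - q) * q ^ b).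
  { intros b. pose proof (batch_weight_nonneg b). split.
    - apply Rmult_le_pos; [assumption | apply Hf].
    - rewrite <- (Rmult_1_r ((1 - q) * q ^ b)) at 2. apply Rmult_le_compat_l; [assumption | apply Hf]. }
  split.
  - apply Series_nonneg; [apply Hb | now apply ex_series_batch_average].
  - eapply Rle_trans; [apply Series_le; [exact Hb | exists 1; exact is_series_batch_weight]|].
    right. exact (is_series_unique _ _ is_series_batch_weight).
Qed.

Lemma transition_convex_01 n k X Y Z :
  0 <= X <= 1 -> 0 <= Y <= 1 -> 0 <= Z <= 1 ->
  0 <= rho / (1 + rho) * X + / (1 + rho) * (INR (S k) / INR (n + S k) * Y + INR n / INR (n + S k) * Z) <= 1.
Proof.
  intros HX HY HZ.
  assert (Hk : 0 < INR (S k)) by (apply lt_0_INR; lia).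
  pose proof (pos_INR n).
  rewrite plus_INR.
  replace (rho / (1 + rho) * X
           + / (1 + rho) * (INR (S k) / (INR n + INR (S k)) * Y + INR n / (INR n + INR (S k)) * Z))
    with ((rho * (INR n + INR (S k)) * X + INR (S k) * Y + INR n * Z) / ((1 + rho) * (INR n + INR (S k))))
    by (field; lra).
  assert (Hr : 0 <= rho * (INR n + INR (S k))) by nra.
  assert (Hd : 0 < (1 + rho) * (INR n + INR (S k))) by nra.
  split.
  - apply Rdiv_le_0_compat; [nra | exact Hd].
  - apply (Rdiv_le_1 _ _ Hd). nra.
Qed.

Lemma absorb_prob_01 m n k : 0 <= p m n k <= 1.
Proof.
  revert n k. induction m as [|m IH]; intros n [|k]; simpl; try lra.
  apply transition_convex_01; [apply batch_average_01; intros; apply IH | apply IH | apply IH].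
Qed.

Lemma sum_n_comb3 (X Y Z : nat -> R) a b c d M :
  sum_n (fun m => a * X m + b * (c * Y m + d * Z m)) M
  = a * sum_n X M + b * (c * sum_n Y M + d * sum_n Z M).
Proof.
  induction M as [|M IH]; [now rewrite !sum_O|].
  rewrite !sum_Sn, IH. simpl. unfold plus. simpl. ring.
Qed.

Lemma absorb_prob_partial_01 M n k : 0 <= sum_n (fun m => p m n k) M <= 1.
Proof.
  revert n k. induction M as [|M IH]; intros n k.
  - rewrite sum_O. apply absorb_prob_01.
  - rewrite sum_n_shift. change (plus ?x ?y) with (x + y). destruct k as [|k].
    + rewrite (sum_n_ext _ (fun _ => 0)) by reflexivity.
      rewrite sum_n_const, Rmult_0_r. simpl. lra.
    + simpl (p 0 n (S k)). rewrite Rplus_0_l.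
      rewrite (sum_n_ext _ (fun m => rho / (1 + rho) * Series (fun b => (1 - q) * q ^ b * p m (n + S b) (S k))
          + / (1 + rho) * (INR (S k) / INR (n + S k) * p m n k + INR n / INR (n + S k) * p m (pred n) (S k))))
        by reflexivity.
      rewrite sum_n_comb3.
      rewrite <- Series_sum_n_swap by (intros; apply ex_series_batch_average; intros; apply absorb_prob_01).
      rewrite (Series_ext _ (fun b => (1 - q) * q ^ b * sum_n (fun m => p m (n + S b) (S k)) M))
        by (intros b; exact (sum_n_mult_l (K := R_Ring) _ _ M)).
      apply transition_convex_01; [apply batch_average_01; intros; apply IH | apply IH | apply IH].
Qed.

Lemma is_series_absorb_prob n k :
  is_series (fun m => p m n k) (Series (fun m => p m n k)) /\ Series (fun m => p m n k) <= 1.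
Proof.
  destruct (ex_finite_lim_seq_incr (sum_n (fun m => p m n k)) 1) as [P HP].
  - intros M. rewrite sum_Sn. pose proof (absorb_prob_01 (S M) n k). change (plus ?x ?y) with (x + y). lra.
  - intros M. apply absorb_prob_partial_01.
  - assert (H : is_series (fun m => p m n k) P) by exact HP.
    rewrite (is_series_unique _ _ H). split; [exact H|].
    apply (is_lim_seq_le (sum_n (fun m => p m n k)) (fun _ => 1) P 1);
      [intros; apply absorb_prob_partial_01 | exact HP | apply is_lim_seq_const].
Qed.

Lemma ex_series_batch_absorb n k :
  ex_series (fun b => Series (fun m => (1 - q) * q ^ b * p m (n + S b) k)).
Proof.
  apply (@ex_series_le R_AbsRing R_CompleteNormedModule _ (fun b => (1 - q) * q ^ b));
    [|exists 1; exact is_series_batch_weight].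
  intros b. change (Rabs (Series (fun m => (1 - q) * q ^ b * p m (n + S b) k)) <= (1 - q) * q ^ b).
  rewrite Series_scal_l. destruct (is_series_absorb_prob (n + S b) k) as [H1 H2].
  assert (0 <= Series (fun m => p m (n + S b) k))
    by (apply Series_nonneg; [intros; apply absorb_prob_01 | eexists; exact H1]).
  pose proof (batch_weight_nonneg b). rewrite Rabs_pos_eq by nra. nra.
Qed.

End Absorption.

(** * The transforms [estar] *)

Section Transform.

Variables (rho q : R) (s : C).
Hypothesis rho_pos : 0 < rho.
Hypothesis q_nonneg : 0 <= q.
Hypothesis q_lt_1 : q < 1.
Hypothesis Re_s_nonneg : 0 <= Re s.

Notation p := (absorb_prob rho q).
Notation e := (estar rho q s).
Let z := (RtoC (1 + rho) / (RtoC (1 + rho) + s))%C.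

Lemma rate_plus_s_neq_0 : (RtoC (1 + rho) + s)%C <> RtoC 0.
Proof.
  intros E. apply (f_equal Re) in E. unfold Re in *. simpl in E. lra.
Qed.

Lemma Cmod_event_factor_le_1 : Cmod z <= 1.
Proof.
  unfold z. rewrite Cmod_div by exact rate_plus_s_neq_0.
  rewrite Cmod_R, Rabs_pos_eq by lra.
  assert (H : 1 + rho <= Cmod (RtoC (1 + rho) + s)).
  { eapply Rle_trans; [|apply re_le_Cmod]. eapply Rle_trans; [|apply Rle_abs].
    unfold Re in *. simpl. lra. }
  assert (Hpos : 0 < Cmod (RtoC (1 + rho) + s)) by (eapply Rlt_le_trans; [|exact H]; lra).
  apply (Rdiv_le_1 _ _ Hpos). exact H.
Qed.

Lemma Cmod_scal_event_factor_pow_le (x : R) m : 0 <= x -> Cmod (RtoC x * z ^ m)%C <= x.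
Proof.
  intros Hx. rewrite Cmod_mult, Cmod_R, Cmod_pow, Rabs_pos_eq by exact Hx.
  rewrite <- (Rmult_1_r x) at 2. apply Rmult_le_compat_l; [exact Hx|].
  rewrite <- (pow1 m). apply pow_incr. split; [apply Cmod_ge_0 | exact Cmod_event_factor_le_1].
Qed.

Lemma Cmod_absorb_term m n k : Cmod (RtoC (p m n k) * z ^ m)%C <= p m n k.
Proof. apply Cmod_scal_event_factor_pow_le, absorb_prob_01; assumption. Qed.

Lemma is_seriesC_estar n k : is_seriesC (fun m => RtoC (p m n k) * z ^ m)%C (e n k).
Proof.
  destruct (is_series_absorb_prob rho q rho_pos q_nonneg q_lt_1 n k) as [H _].
  apply (is_seriesC_CSeries _ _ (fun m => Cmod_absorb_term m n k)). eexists. exact H.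
Qed.

Lemma Cmod_estar_le_1 n k : Cmod (e n k) <= 1.
Proof.
  destruct (is_series_absorb_prob rho q rho_pos q_nonneg q_lt_1 n k) as [H H1].
  eapply Rle_trans; [|exact H1].
  exact (is_seriesC_norm_le _ _ _ _ (is_seriesC_estar n k) H (fun m => Cmod_absorb_term m n k)).
Qed.

Lemma estar_zero n : e n O = RtoC 1.
Proof.
  apply CSeries_unique. replace (RtoC 1) with (RtoC (p O n O) * z ^ O + RtoC 0)%C by (simpl; ring).
  apply is_seriesC_shift. eapply is_series_ext; [|apply is_seriesC_zero]. intros m. simpl. ring.
Qed.

Lemma is_seriesC_batch_average n k :
  is_seriesC (fun m => RtoC (Series (fun b => (1 - q) * q ^ b * p m (n + S b) (S k))%R) * z ^ m)%C
    (CSeries (fun b => RtoC ((1 - q) * q ^ b) * e (n + S b) (S k))%C).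
Proof.
  set (w b := (1 - q) * q ^ b).
  assert (Hw : forall b, 0 <= w b) by (intros b; apply batch_weight_nonneg; lra).
  assert (Hp := absorb_prob_01 rho q rho_pos q_nonneg q_lt_1).
  assert (HP := is_series_absorb_prob rho q rho_pos q_nonneg q_lt_1).
  assert (Hcol : forall b, ex_series (fun m => w b * p m (n + S b) (S k)))
    by (intros b; apply ex_series_Rscal_l; eexists; apply HP).
  assert (Hcols := ex_series_batch_absorb rho q rho_pos q_nonneg q_lt_1 n (S k)).
  assert (H := is_seriesC_swap (fun m b => w b * p m (n + S b) (S k))
                 ltac:(intros; apply Rmult_le_pos; [apply Hw | apply Hp]) Hcol Hcols
                 (fun m b => RtoC (w b * p m (n + S b) (S k)) * z ^ m)%C
                 ltac:(intros m b; apply Cmod_scal_event_factor_pow_le, Rmult_le_pos; [apply Hw | apply Hp])).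
  cbv beta in H.
  assert (Erow : forall m, CSeries (fun b => RtoC (w b * p m (n + S b) (S k))%R * z ^ m)%C
                           = (RtoC (Series (fun b => (w b * p m (n + S b) (S k))%R)) * z ^ m)%C).
  { intros m. rewrite (CSeries_ext _ (fun b => z ^ m * RtoC (w b * p m (n + S b) (S k))%R)%C)
      by (intros; apply Cmult_comm).
    assert (Hr := is_seriesC_RtoC _ _ (Series_correct _
      (ex_series_batch_average q q_nonneg q_lt_1 (fun b => p m (n + S b) (S k)) (fun b => Hp _ _ _)))).
    rewrite (CSeries_scal _ _ _ Hr), (CSeries_unique _ _ Hr). apply Cmult_comm. }
  assert (Ecol : forall b, CSeries (fun m => RtoC (w b * p m (n + S b) (S k))%R * z ^ m)%C
                           = (RtoC (w b) * e (n + S b) (S k))%C).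
  { intros b. rewrite (CSeries_ext _ (fun m => RtoC (w b) * (RtoC (p m (n + S b) (S k)) * z ^ m))%C)
      by (intros; rewrite RtoC_mult; ring).
    exact (CSeries_scal _ _ _ (is_seriesC_estar _ _)). }
  rewrite (CSeries_ext _ _ Ecol) in H.
  eapply is_series_ext; [|exact H]. exact Erow.
Qed.

Lemma estar_rec n k :
  ((RtoC (1 + rho) + s) * e n (S k))%C =
  (RtoC rho * CSeries (fun b => RtoC ((1 - q) * q ^ b)%R * e (n + S b) (S k))
   + RtoC (INR (S k) / INR (n + S k)) * e n k
   + RtoC (INR n / INR (n + S k)) * e (pred n) (S k))%C.
Proof.
  set (W := CSeries (fun b => RtoC ((1 - q) * q ^ b)%R * e (n + S b) (S k))%C).
  set (al := rho / (1 + rho)). set (be := / (1 + rho)).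
  set (ga := INR (S k) / INR (n + S k)). set (de := INR n / INR (n + S k)).
  assert (Hnext : is_seriesC (fun m => RtoC (p (S m) n (S k)) * z ^ S m)%C
     (z * (RtoC al * W + RtoC be * (RtoC ga * e n k + RtoC de * e (pred n) (S k))))%C).
  { eapply is_series_ext; [|apply is_seriesC_scal, is_seriesC_plus;
      [apply is_seriesC_scal, is_seriesC_batch_average
      | apply is_seriesC_scal, is_seriesC_plus; apply is_seriesC_scal, is_seriesC_estar]].
    intros m. change (p (S m) n (S k)) with
      (al * Series (fun b => (1 - q) * q ^ b * p m (n + S b) (S k))
       + be * (ga * p m n k + de * p m (pred n) (S k))).
    rewrite RtoC_plus, !RtoC_mult, RtoC_plus, !RtoC_mult. simpl. ring. }
  assert (Hrec : e n (S k) = (z * (RtoC al * W + RtoC be * (RtoC ga * e n k + RtoC de * e (pred n) (S k))))%C).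
  { symmetry. apply (is_seriesC_unique _ _ _ Hnext).
    replace (e n (S k)) with (e n (S k) - RtoC (p O n (S k)) * z ^ O)%C by (simpl; ring).
    exact (is_seriesC_unshift _ _ (is_seriesC_estar n (S k))). }
  assert (H1 : RtoC (1 + rho) <> RtoC 0) by (intros E; apply RtoC_inj in E; lra).
  rewrite Hrec. unfold z, al, be. rewrite RtoC_div, RtoC_inv by lra.
  field. split; [exact H1 | exact rate_plus_s_neq_0].
Qed.

End Transform.

(** * Generating functions *)

Definition qtail (q : R) (c : nat -> nat -> C) (n b : nat) : C :=
  CSeries (fun k => RtoC q ^ k * c (n + k)%nat b)%C.

Section QTail.

Variables (q M : R) (Mb : nat -> R) (c : nat -> nat -> C).
Hypothesis q_nonneg : 0 <= q.
Hypothesis q_lt_1 : q < 1.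
Hypothesis c_col_bound : forall n b, Cmod (c n b) <= Mb b.
Hypothesis Mb_le_poly : forall b, Mb b <= M * INR (S b).

Let Ft n b := qtail q c (S n) b.

Lemma is_seriesC_qtail n b : is_seriesC (fun k => RtoC q ^ k * c (n + k)%nat b)%C (qtail q c n b).
Proof.
  apply (is_seriesC_CSeries _ (fun k => Mb b * q ^ k)).
  - intros k. rewrite Cmod_mult, Cmod_pow, Cmod_R, Rabs_pos_eq, Rmult_comm by exact q_nonneg.
    apply Rmult_le_compat_r; [apply pow_le, q_nonneg | apply c_col_bound].
  - apply ex_series_Rscal_l, ex_series_geom. rewrite Rabs_pos_eq; lra.
Qed.

Lemma Cmod_qtail_le n b : Cmod (qtail q c n b) <= Mb b / (1 - q).
Proof.
  apply (is_seriesC_norm_le _ _ (fun k => Mb b * q ^ k) _ (is_seriesC_qtail n b)).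
  - apply is_series_Rscal_l, is_series_geom. rewrite Rabs_pos_eq; lra.
  - intros k. rewrite Cmod_mult, Cmod_pow, Cmod_R, Rabs_pos_eq, Rmult_comm by exact q_nonneg.
    apply Rmult_le_compat_r; [apply pow_le, q_nonneg | apply c_col_bound].
Qed.

Lemma qtail_rec n b : qtail q c n b = (c n b + RtoC q * qtail q c (S n) b)%C.
Proof.
  apply (is_seriesC_unique _ _ _ (is_seriesC_qtail n b)).
  replace (c n b + RtoC q * qtail q c (S n) b)%C
    with (RtoC q ^ 0 * c (n + 0)%nat b + RtoC q * qtail q c (S n) b)%C
    by (rewrite Nat.add_0_r; simpl; ring).
  apply is_seriesC_shift.
  eapply is_series_ext; [|apply is_seriesC_scal, is_seriesC_qtail].
  intros k. rewrite <- plus_n_Sm. simpl. ring.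
Qed.

Lemma col_bound_nonneg b : 0 <= M * INR (S b).
Proof.
  eapply Rle_trans; [apply Cmod_ge_0 | eapply Rle_trans; [apply (c_col_bound O b) | apply Mb_le_poly]].
Qed.

Lemma poly_bounded_col_bound : poly_bounded c M.
Proof.
  intros n b. rewrite (Rmult_comm (INR (S n))), <- Rmult_assoc.
  eapply Rle_trans; [apply c_col_bound|]. eapply Rle_trans; [apply Mb_le_poly|].
  rewrite <- (Rmult_1_r (M * INR (S b))) at 1. apply Rmult_le_compat_l; [apply col_bound_nonneg|].
  apply (le_INR 1). lia.
Qed.

Lemma poly_bounded_qtail : poly_bounded Ft (M / (1 - q)).
Proof.
  intros n b. eapply Rle_trans; [apply Cmod_qtail_le|].
  assert (HM := col_bound_nonneg b).
  assert (0 <= M * INR (S b) / (1 - q)) by (apply Rdiv_le_0_compat; lra).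
  apply (Rle_trans _ (M * INR (S b) / (1 - q))).
  { unfold Rdiv. apply Rmult_le_compat_r; [apply Rlt_le, Rinv_0_lt_compat; lra | apply Mb_le_poly]. }
  unfold Rdiv. replace (M * / (1 - q) * (INR (S n) * INR (S b)))
    with (M * INR (S b) * / (1 - q) * INR (S n)) by ring.
  rewrite <- (Rmult_1_r (M * INR (S b) * / (1 - q))) at 1.
  apply Rmult_le_compat_l; [exact H | apply (le_INR 1); lia].
Qed.

Lemma is_dps_at_q u v : Cmod v < 1 ->
  is_dps (fun n b => match n with O => qtail q c O b | S _ => RtoC 0 end) u v (dps c q v).
Proof.
  intros Hv. assert (Hq : Cmod (RtoC q) < 1) by (rewrite Cmod_R, Rabs_pos_eq; lra).
  exists (fun n => match n with O => dps c q v | S _ => RtoC 0 end). split.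
  - intros [|n].
    + rewrite <- (dps_transpose c M q v poly_bounded_col_bound Hq Hv).
      eapply is_series_ext; [|apply (dps_spec (fun n b => c b n) M v q)].
      * intros b. cbv beta. rewrite Cmult_comm. f_equal. apply CSeries_ext. intros k. apply Cmult_comm.
      * intros n b. rewrite (Rmult_comm (INR (S n))). apply poly_bounded_col_bound.
      * exact Hv.
      * exact Hq.
    + eapply is_series_ext; [|apply is_seriesC_zero]. intros b. simpl. ring.
  - set (a n := (u ^ n * match n with O => dps c q v | S _ => RtoC 0 end)%C).
    assert (H : is_seriesC a (a O + RtoC 0)%C).
    { apply is_seriesC_shift. eapply is_series_ext; [|apply is_seriesC_zero].
      intros n. unfold a. simpl. ring. }
    replace (a O + RtoC 0)%C with (dps c q v) in H by (unfold a; simpl; ring). exact H.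
Qed.

Lemma dps_qtail_decomposition u v : Cmod u < 1 -> Cmod v < 1 ->
  dps c u v = (dps c q v + (u - q) * dps Ft u v)%C.
Proof.
  intros Hu Hv.
  assert (HF := is_dps_dps Ft _ u v poly_bounded_qtail Hu Hv).
  assert (H := is_dps_plus _ _ _ _ _ _ (is_dps_at_q u v Hv)
                 (is_dps_plus _ _ _ _ _ _ (is_dps_shift_u _ _ _ _ HF) (is_dps_scal (- q) _ _ _ _ HF))).
  transitivity (dps c q v + (u * dps Ft u v + - q * dps Ft u v))%C; [|ring].
  apply (is_dps_unique c u v); [exact (is_dps_dps c M u v poly_bounded_col_bound Hu Hv)|].
  refine (is_dps_ext _ _ _ _ _ _ H). intros [|n] b; cbv beta; simpl shift_u; unfold Ft.
  - rewrite (qtail_rec O b). ring.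
  - rewrite (qtail_rec (S n) b). ring.
Qed.

End QTail.

(* The coefficients of E and F on the bidisc (Egen_dps, Fgen_dps).  Column b = 0 of [Ecoef] is
   zero since batches are non-empty, although [estar n 0 = 1]. *)
Definition Ecoef (rho q : R) (s : C) (n b : nat) : C :=
  match b with O => RtoC 0 | S _ => estar rho q s n b end.

Definition Fcoef (rho q : R) (s : C) (n b : nat) : C := qtail q (Ecoef rho q s) (S n) b.

Lemma Egen_dps rho q s : Egen rho q s = dps (Ecoef rho q s).
Proof.
  apply functional_extensionality. intros u. apply functional_extensionality. intros v.
  apply CSeries_ext. intros n. f_equal.
  rewrite <- (CSeries_shift_zero (fun b => Ecoef rho q s n b * v ^ b)%C) by (simpl; ring).
  reflexivity.
Qed.

Section GeneratingFunctions.

Variables (rho q : R) (s : C).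
Hypothesis rho_pos : 0 < rho.
Hypothesis q_nonneg : 0 <= q.
Hypothesis q_lt_1 : q < 1.
Hypothesis Re_s_nonneg : 0 <= Re s.

Notation e := (estar rho q s).
Notation Ec := (Ecoef rho q s).
Notation Fc := (Fcoef rho q s).

Lemma Ecoef_bounded n b : Cmod (Ec n b) <= 1.
Proof.
  destruct b; simpl; [rewrite Cmod_0; lra | now apply Cmod_estar_le_1].
Qed.

Lemma Fcoef_bounded n b : Cmod (Fc n b) <= 1 / (1 - q).
Proof. exact (Cmod_qtail_le q (fun _ => 1) Ec q_nonneg q_lt_1 Ecoef_bounded (S n) b). Qed.

Lemma is_seriesC_Fcoef n b :
  is_seriesC (fun k => RtoC q ^ k * Ec (S n + k)%nat b)%C (Fc n b).
Proof. exact (is_seriesC_qtail q (fun _ => 1) Ec q_nonneg q_lt_1 Ecoef_bounded (S n) b). Qed.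

Lemma Fcoef_b0 n : Fc n O = RtoC 0.
Proof.
  apply CSeries_unique. eapply is_series_ext; [|apply is_seriesC_zero]. intros k. simpl. ring.
Qed.

Lemma batch_average_Fcoef n b :
  CSeries (fun c => RtoC ((1 - q) * q ^ c)%R * e (n + S c) (S b))%C = (RtoC (1 - q) * Fc n (S b))%C.
Proof.
  rewrite <- (CSeries_scal _ _ _ (is_seriesC_Fcoef n (S b))).
  apply CSeries_ext. intros k. rewrite Nat.add_succ_r, RtoC_mult, RtoC_pow. simpl. ring.
Qed.

Lemma estar_rec_scaled n b :
  ((RtoC (1 + rho) + s) * INR (n + S b) * e n (S b))%C =
  (RtoC (rho * (1 - q)) * INR (n + S b) * Fc n (S b) + INR (S b) * e n b
   + INR n * e (pred n) (S b))%C.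
Proof.
  assert (HN : INR (n + S b) <> 0) by (apply not_0_INR; lia).
  assert (HNC : RtoC (INR (n + S b)) <> RtoC 0) by (intros E; apply RtoC_inj in E; contradiction).
  transitivity (INR (n + S b) * ((RtoC (1 + rho) + s) * e n (S b)))%C; [ring|].
  rewrite (estar_rec rho q s rho_pos q_nonneg q_lt_1 Re_s_nonneg n b), batch_average_Fcoef.
  rewrite !RtoC_div by exact HN. rewrite RtoC_mult. field. exact HNC.
Qed.

(* [estar_rec_scaled] in terms of shifted arrays; the term at b = 1 stands for [estar n 0 = 1],
   which [Ecoef] does not record. *)
Lemma euler_coef_identity n b :
  ((RtoC (1 + rho) + s) * (euler_u Ec n b + euler_v Ec n b))%C =
  (RtoC (rho * (1 - q)) * (euler_u Fc n b + euler_v Fc n b)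
   + match b with 1%nat => RtoC 1 | _ => RtoC 0 end
   + shift_v Ec n b + shift_v (euler_v Ec) n b
   + shift_u Ec n b + shift_u (euler_u Ec) n b)%C.
Proof.
  unfold euler_u, euler_v. destruct b as [|b].
  - rewrite !Fcoef_b0. destruct n; simpl; ring.
  - assert (Hv : (match S b with 1%nat => RtoC 1 | _ => RtoC 0 end
                  + shift_v Ec n (S b) + shift_v (fun n b => INR b * Ec n b) n (S b))%C
                 = (INR (S b) * e n b)%C).
    { destruct b as [|b]; cbn -[INR].
      - rewrite estar_zero. simpl. ring.
      - rewrite (S_INR (S b)), RtoC_plus. ring. }
    assert (Hu : (shift_u Ec n (S b) + shift_u (fun n b => INR n * Ec n b) n (S b))%C
                 = (INR n * e (pred n) (S b))%C).
    { destruct n as [|n]; cbn -[INR]; [change (INR 0) with 0; ring | rewrite (S_INR n), RtoC_plus; ring]. }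
    transitivity ((RtoC (1 + rho) + s) * INR (n + S b) * e n (S b))%C.
    { rewrite plus_INR, (RtoC_plus (INR n)). change (Ec n (S b)) with (e n (S b)). ring. }
    rewrite estar_rec_scaled, plus_INR, (RtoC_plus (INR n)), <- Hv, <- Hu. ring.
Qed.


Lemma one_le_INR_succ b : 1 <= 1 * INR (S b).
Proof. rewrite Rmult_1_l. apply (le_INR 1). lia. Qed.

Lemma deriv_v_Ecoef_bounded n b : Cmod (deriv_v Ec n b) <= INR (S b).
Proof.
  unfold deriv_v. rewrite Cmod_mult, Cmod_R, Rabs_pos_eq by apply pos_INR.
  rewrite <- (Rmult_1_r (INR (S b))) at 2. apply Rmult_le_compat_l; [apply pos_INR | apply Ecoef_bounded].
Qed.

Lemma Egen_decomposition u v : Cmod u < 1 -> Cmod v < 1 ->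
  dps Ec u v = (dps Ec q v + (u - q) * dps Fc u v)%C.
Proof.
  exact (dps_qtail_decomposition q 1 (fun _ => 1) Ec q_nonneg q_lt_1 Ecoef_bounded one_le_INR_succ u v).
Qed.

Lemma Egen_v_decomposition u v : Cmod u < 1 -> Cmod v < 1 ->
  dps (deriv_v Ec) u v = (dps (deriv_v Ec) q v + (u - q) * dps (deriv_v Fc) u v)%C.
Proof.
  rewrite (dps_ext (deriv_v Fc) (fun n b => qtail q (deriv_v Ec) (S n) b)).
  - exact (dps_qtail_decomposition q 1 (fun b => INR (S b)) (deriv_v Ec) q_nonneg q_lt_1
             deriv_v_Ecoef_bounded (fun b => Req_le _ _ (eq_sym (Rmult_1_l _))) u v).
  - intros n b. unfold deriv_v, Fcoef, qtail.
    rewrite <- (CSeries_scal _ _ _ (is_seriesC_Fcoef n (S b))).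
    apply CSeries_ext. intros k. ring.
Qed.

Lemma Egen_u_decomposition u v : Cmod u < 1 -> Cmod v < 1 ->
  dps (deriv_u Ec) u v = (dps Fc u v + (u - q) * dps (deriv_u Fc) u v)%C.
Proof.
  intros Hu Hv.
  assert (HF := is_dps_dps Fc _ u v (poly_bounded_of_bounded _ _ Fcoef_bounded) Hu Hv).
  assert (HFu := is_dps_dps (deriv_u Fc) _ u v (poly_bounded_deriv_u _ _ Fcoef_bounded) Hu Hv).
  assert (H := is_dps_plus _ _ _ _ _ _ HF
                 (is_dps_plus _ _ _ _ _ _ (is_dps_euler_u _ _ _ _ HFu) (is_dps_scal (- q) _ _ _ _ HFu))).
  transitivity (dps Fc u v + (u * dps (deriv_u Fc) u v + - q * dps (deriv_u Fc) u v))%C; [|ring].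
  apply (is_dps_unique (deriv_u Ec) u v);
    [exact (is_dps_dps _ _ u v (poly_bounded_deriv_u _ _ Ecoef_bounded) Hu Hv)|].
  refine (is_dps_ext _ _ _ _ _ _ H). intros n b. cbv beta. unfold deriv_u, euler_u, Fcoef.
  rewrite (qtail_rec q (fun _ => 1) Ec q_nonneg q_lt_1 Ecoef_bounded (S n) b), S_INR, RtoC_plus. ring.
Qed.

Lemma Egen_euler_identity u v : Cmod u < 1 -> Cmod v < 1 ->
  let E := dps Ec u v in
  let Eu := dps (deriv_u Ec) u v in let Ev := dps (deriv_v Ec) u v in
  let Fu := dps (deriv_u Fc) u v in let Fv := dps (deriv_v Fc) u v in
  ((RtoC (1 + rho) + s) * (u * Eu + v * Ev))%C =
  (RtoC (rho * (1 - q)) * (u * Fu + v * Fv) + v / (1 - u) + v * E + v * (v * Ev)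
   + u * E + u * (u * Eu))%C.
Proof.
  intros Hu Hv E Eu Ev Fu Fv.
  assert (HE := is_dps_dps Ec _ u v (poly_bounded_of_bounded _ _ Ecoef_bounded) Hu Hv).
  assert (HEu := is_dps_dps _ _ u v (poly_bounded_deriv_u _ _ Ecoef_bounded) Hu Hv).
  assert (HEv := is_dps_dps _ _ u v (poly_bounded_deriv_v _ _ Ecoef_bounded) Hu Hv).
  assert (HFu := is_dps_dps _ _ u v (poly_bounded_deriv_u _ _ Fcoef_bounded) Hu Hv).
  assert (HFv := is_dps_dps _ _ u v (poly_bounded_deriv_v _ _ Fcoef_bounded) Hu Hv).
  apply (is_dps_unique (fun n b => (RtoC (1 + rho) + s) * (euler_u Ec n b + euler_v Ec n b))%C u v).
  - exact (is_dps_scal _ _ _ _ _ (is_dps_plus _ _ _ _ _ _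
             (is_dps_euler_u _ _ _ _ HEu) (is_dps_euler_v _ _ _ _ HEv))).
  - refine (is_dps_ext _ _ _ _ _ (fun n b => eq_sym (euler_coef_identity n b)) _).
    repeat apply is_dps_plus.
    + exact (is_dps_scal _ _ _ _ _ (is_dps_plus _ _ _ _ _ _
               (is_dps_euler_u _ _ _ _ HFu) (is_dps_euler_v _ _ _ _ HFv))).
    + exact (is_dps_geom u v Hu).
    + exact (is_dps_shift_v _ _ _ _ HE).
    + exact (is_dps_shift_v _ _ _ _ (is_dps_euler_v _ _ _ _ HEv)).
    + exact (is_dps_shift_u _ _ _ _ HE).
    + exact (is_dps_shift_u _ _ _ _ (is_dps_euler_u _ _ _ _ HEu)).
Qed.

Lemma Cmod_q_lt_1 : Cmod (RtoC q) < 1.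
Proof. rewrite Cmod_R, Rabs_pos_eq; lra. Qed.

Lemma Fgen_dps u v : Cmod u < 1 -> Cmod v < 1 -> Fgen rho q s u v = dps Fc u v.
Proof.
  intros Hu Hv. unfold Fgen. rewrite Egen_dps.
  destruct (excluded_middle_informative (u = RtoC q)) as [Hq | Hq].
  - subst u. apply Cderive_correct.
    replace (dps Fc q v) with (dps (deriv_u Ec) q v) by (rewrite Egen_u_decomposition by assumption; ring).
    exact (is_derive_dps_u Ec 1 q v Ecoef_bounded Hu Hv).
  - rewrite Egen_decomposition by assumption.
    field. intros E. apply Hq. replace u with ((u - q) + q)%C by ring. rewrite E. ring.
Qed.

Lemma is_derive_Fgen_u u v : Cmod u < 1 -> Cmod v < 1 ->
  @is_derive C_AbsRing C_NormedModule (fun w => Fgen rho q s w v) u (dps (deriv_u Fc) u v).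
Proof.
  intros Hu Hv. apply (is_derive_ext_loc (fun w => dps Fc w v)).
  - apply (filter_imp (fun w => Cmod w < 1)); [|now apply locally_disc].
    intros w Hw. symmetry. now apply Fgen_dps.
  - exact (is_derive_dps_u Fc _ u v Fcoef_bounded Hu Hv).
Qed.

Lemma is_derive_Fgen_v u v : Cmod u < 1 -> Cmod v < 1 ->
  @is_derive C_AbsRing C_NormedModule (fun w => Fgen rho q s u w) v (dps (deriv_v Fc) u v).
Proof.
  intros Hu Hv. apply (is_derive_ext_loc (fun w => dps Fc u w)).
  - apply (filter_imp (fun w => Cmod w < 1)); [|now apply locally_disc].
    intros w Hw. symmetry. now apply Fgen_dps.
  - exact (is_derive_dps_v Fc _ u v Fcoef_bounded Hu Hv).
Qed.

Lemma is_derive_Egen_q_v v : Cmod v < 1 ->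
  @is_derive C_AbsRing C_NormedModule (fun w => Egen rho q s q w) v (dps (deriv_v Ec) q v).
Proof.
  intros Hv. rewrite Egen_dps. exact (is_derive_dps_v Ec 1 q v Ecoef_bounded Cmod_q_lt_1 Hv).
Qed.

End GeneratingFunctions.

Theorem mainTheorem4 (rho q : R) (s u v : C)
  (Hrho : 0 < rho) (Hq0 : 0 < q) (Hq1 : q < 1) (Hstab : rho + q < 1)
  (Hs : 0 <= Re s) (Hu : Cmod u < 1) (Hv : Cmod v < 1) :
  exists Fu Fv Ev : C,
    @is_derive C_AbsRing C_NormedModule (fun w => Fgen rho q s w v) u Fu /\
    @is_derive C_AbsRing C_NormedModule (fun w => Fgen rho q s u w) v Fv /\
    @is_derive C_AbsRing C_NormedModule (fun w => Egen rho q s (RtoC q) w) v Ev /\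
    (u * Ppoly rho q s u * Fu
     + v * (RtoC (rho * (1 - q)) - (s + RtoC 1 + RtoC rho - v) * (u - RtoC q)) * Fv
     + (u * (u - s - RtoC 1 - RtoC rho) + (u - RtoC q) * (u + v)) * Fgen rho q s u v
     + (v / (RtoC 1 - u) + (u + v) * Egen rho q s (RtoC q) v
        - v * (s + RtoC 1 + RtoC rho - v) * Ev))%C = RtoC 0.
Proof.
  assert (Hq : 0 <= q) by lra.
  set (Ec := Ecoef rho q s). set (Fc := Fcoef rho q s).
  exists (dps (deriv_u Fc) u v), (dps (deriv_v Fc) u v), (dps (deriv_v Ec) q v).
  split; [now apply is_derive_Fgen_u|].
  split; [now apply is_derive_Fgen_v|].
  split; [now apply is_derive_Egen_q_v|].
  assert (Euler := Egen_euler_identity rho q s Hrho Hq Hq1 Hs u v Hu Hv). cbv zeta in Euler.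
  rewrite (Egen_decomposition rho q s Hrho Hq Hq1 Hs u v Hu Hv),
    (Egen_u_decomposition rho q s Hrho Hq Hq1 Hs u v Hu Hv),
    (Egen_v_decomposition rho q s Hrho Hq Hq1 Hs u v Hu Hv), RtoC_plus in Euler.
  rewrite (Fgen_dps rho q s Hrho Hq Hq1 Hs u v Hu Hv), Egen_dps.
  unfold Ppoly. fold Ec Fc in Euler |- *.
  unfold Cdiv in *.
  rewrite RtoC_mult, RtoC_minus in Euler |- *.
  match type of Euler with ?X = ?Y => transitivity (- (X - Y))%C; [ring | rewrite Euler; ring] end.
Qed.
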